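(* In the errorless symmetric relay network described in the context, for every horizon $T\ge1$ the greedy sampling policy $G$ minimizes the average sum AoI at the relay, i.e. $G\in\arg\min_{\pi}\frac{1}{TK}\sum_{t=1}^T\sum_{k=1}^K g_k^{\pi}(t)$; equivalently, $G\in\arg\max_{\pi}\sum_{t=1}^T\sum_{\tau=1}^{t-1}R(\mathcal{S}^{\pi}(\tau))$.
   Context: Fix integers $K\ge 2$ and $S,U$ with $1\le S<K$, $1\le U<K$, and $S=U$. There are $K$ processes indexed by $k\in\{1,\dots,K\}$ and time slots $t=1,2,\dots$. The state at time $t$ consists of relay AoI values $g_k(t)$ and destination AoI values $h_k(t)$, with $g_k(1)=h_k(1)=1$ for all $k$. A policy $\pi$ is a map assigning to the current state a pair $(\mathcal{S}^{\pi}(t),\mathcal{U}^{\pi}(t))$ of subsets of $\{1,\dots,K\}$ with $|\mathcal{S}^{\pi}(t)|=S$ and $|\mathcal{U}^{\pi}(t)|=U$. Errorless dynamics: $g_k(t+1)=1$ if $k\in\mathcal{S}(t)$, else $g_k(t+1)=g_k(t)+1$; $h_k(t+1)=g_k(t)+1$ if $k\in\mathcal{U}(t)$, else $h_k(t+1)=h_k(t)+1$. Write $g_k^\pi(t)$ for the relay AoI under $\pi$ and $R(\mathcal{S}^{\pi}(\tau))=\sum_{k\in\mathcal{S}^{\pi}(\tau)} g_k^{\pi}(\tau)$. The greedy policy $G$ chooses at each time $t$ a set $\mathcal{S}^G(t)$ of $S$ indices with the largest values $g_k(t)$ (maximizing $\sum_{k\in\mathcal{S}}g_k(t)$ over $|\mathcal{S}|=S$)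 and a set $\mathcal{U}^G(t)$ of $U$ indices maximizing $\sum_{k\in\mathcal{U}}(h_k(t)-g_k(t))$. *)

From mathcomp Require Import all_boot all_order all_algebra.
Set Implicit Arguments. Unset Strict Implicit. Unset Printing Implicit Defensive.

(* State at time t: (relay AoI g, destination AoI h), indexed by 'I_K
   (process k in {1..K} is represented by ordinal k-1). *)
Definition state (K : nat) : Type :=
  ({ffun 'I_K -> nat} * {ffun 'I_K -> nat})%type.

(* A policy maps the current state to (sampling set S(t), update set U(t)). *)
Definition policy (K : nat) : Type := state K -> ({set 'I_K} * {set 'I_K})%type.

Definition valid_policy (K S U : nat) (pi : policy K) : Prop :=
  forall st : state K, #|(pi st).1| = S /\ #|(pi st).2| = U.

Definition init_state (K : nat) : state K := ([ffun=> 1%N], [ffun=> 1%N]).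

Definition step (K : nat) (pi : policy K) (st : state K) : state K :=
  let g := st.1 in let h := st.2 in
  ([ffun k => if k \in (pi st).1 then 1%N else (g k).+1],
   [ffun k => if k \in (pi st).2 then (g k).+1 else (h k).+1]).

(* traj pi n = state at time slot t = n+1. *)
Fixpoint traj (K : nat) (pi : policy K) (n : nat) : state K :=
  match n with
  | 0 => init_state K
  | n'.+1 => step pi (traj pi n')
  end.

Definition relayAoI (K : nat) (pi : policy K) (t : nat) (k : 'I_K) : nat :=
  (traj pi t.-1).1 k.

Definition total_relay_AoI (K : nat) (pi : policy K) (T : nat) : nat :=
  \sum_(1 <= t < T.+1) \sum_(k < K) relayAoI pi t k.

(* Greedy policy (any tie-breaking): S^G(t) maximizes sum_{k in S} g_k(t)
   over |S| = S, and U^G(t) maximizes sum_{k in U} (h_k(t) - g_k(t))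
   (integer difference) over |U| = U. *)
Definition greedy_policy (K S U : nat) (G : policy K) : Prop :=
  valid_policy S U G /\
  forall st : state K,
    (forall A : {set 'I_K}, #|A| = S ->
       (\sum_(k in A) st.1 k <= \sum_(k in (G st).1) st.1 k)%N) /\
    (forall B : {set 'I_K}, #|B| = U ->
       (\sum_(k in B) ((st.2 k)%:Z - (st.1 k)%:Z)
        <= \sum_(k in (G st).2) ((st.2 k)%:Z - (st.1 k)%:Z))%R).

From mathcomp Require Import all_boot all_order all_algebra.
From mathcomp Require Import zify.
Set Implicit Arguments. Unset Strict Implicit. Unset Printing Implicit Defensive.

(* Only the sampling sets matter for the relay ages.  By the layer-cake
   formula, sum_k g_k = sum_v (K - #{k | g_k <= v}), so it suffices to
   maximise, at every slot t and every level v < t, the number of processes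
   of age at most v.  Such a process was sampled during the last v slots,
   hence there are at most min(S v, K) of them under any policy.  Greedy
   sampling always refreshes the S oldest processes, so the freshly sampled
   set and the set of processes of age at most v are either disjoint or
   cover everything; by induction on t this makes the bound min(S v, K)
   an equality for the greedy policy. *)

Section Ages.

Variable T : finType.
Implicit Types (f : T -> nat) (X Y : {set T}) (g : {ffun T -> nat}).

Definition young f v : {set T} := [set i | f i <= v].

Lemma sum_ltn_ord x N : \sum_(v < N) (v < x : nat) = minn x N.
Proof.
elim: N => [|N IHN]; first by rewrite big_ord0 minn0.
by rewrite big_ord_recr /= IHN; case: (ltnP N x) => ltNx; lia.
Qed.

Lemma sum_layers f N : (forall i, f i <= N) ->
  \sum_i f i = \sum_(v < N) (#|T| - #|young f v|).
Proof.
move=> le_fN.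
transitivity (\sum_i \sum_(v < N) (v < f i : nat)).
  by apply: eq_bigr => i _; rewrite sum_ltn_ord; move: (le_fN i); lia.
rewrite exchange_big; apply: eq_bigr => v _.
rewrite -(setCK (young f v)) -cardsCs -sum1_card [RHS]big_mkcond /=.
by apply: eq_bigr => i _; rewrite !inE -ltnNge; case: (v < f i).
Qed.

Lemma card_setU_min X Y : X :&: Y = set0 \/ X :|: Y = setT ->
  #|X :|: Y| = minn (#|X| + #|Y|) #|T|.
Proof.
move=> disjoint_or_cover; move: (max_card (X :|: Y)) (cardsUI X Y).
by case: disjoint_or_cover => ->; rewrite ?cards0 ?cardsT; lia.
Qed.

Definition refresh X g : {ffun T -> nat} :=
  [ffun i => if i \in X then 1 else (g i).+1].

Lemma young_refresh0 X g : young (refresh X g) 0 = set0.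
Proof. by apply/setP => i; rewrite !inE ffunE; case: (i \in X). Qed.

Lemma young_refreshS X g w : young (refresh X g) w.+1 = X :|: young g w.
Proof. by apply/setP => i; rewrite !inE ffunE; case: (i \in X). Qed.

Section MaxSum.

Variables (S : nat) (X : {set T}) (f : T -> nat).
Hypothesis card_X : #|X| = S.
Hypothesis X_maxsum :
  forall A : {set T}, #|A| = S -> \sum_(i in A) f i <= \sum_(i in X) f i.

Lemma maxsum_exchange i j : i \in X -> j \notin X -> f j <= f i.
Proof.
move=> Xi notXj.
have notXDj : j \notin X :\ i by rewrite !inE (negbTE notXj) andbF.
have card_swap : #|j |: (X :\ i)| = S.
  by rewrite cardsU1 notXDj -card_X (cardsD1 i X) Xi.
have := X_maxsum card_swap.
rewrite (big_setU1 _ notXDj) (big_setD1 _ Xi) /=; lia.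
Qed.

Lemma maxsum_young w : X :&: young f w = set0 \/ X :|: young f w = setT.
Proof.
have [disjoint | [i]] := set_0Vmem (X :&: young f w); first by left.
rewrite !inE => /andP[Xi le_fi_w]; right.
apply/setP => j; rewrite !inE; case: (boolP (j \in X)) => //= notXj.
exact: leq_trans (maxsum_exchange Xi notXj) le_fi_w.
Qed.

End MaxSum.

End Ages.

Section Trajectories.

Variable K : nat.
Implicit Types pi : policy K.

Lemma traj_relay_step pi n :
  (traj pi n.+1).1 = refresh (pi (traj pi n)).1 (traj pi n).1.
Proof. by []. Qed.

Lemma traj_relay_le pi n k : (traj pi n).1 k <= n.+1.
Proof.
elim: n k => [|n IHn] k; first by rewrite ffunE.
by rewrite traj_relay_step ffunE; case: (_ \in _) => //; apply: IHn.
Qed.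

Lemma young_traj0 pi n : young (traj pi n).1 0 = set0.
Proof.
case: n => [|n]; last exact: young_refresh0.
by apply/setP => k; rewrite !inE ffunE.
Qed.

Lemma card_young_traj_le S U pi : valid_policy S U pi ->
  forall n v, v <= n -> #|young (traj pi n).1 v| <= S * v.
Proof.
move=> valid_pi; elim=> [|n IHn] [|w] // le_wn; rewrite ?young_traj0 ?cards0 //.
rewrite traj_relay_step young_refreshS (leq_trans (leq_card_setU _ _)) //.
by rewrite (valid_pi _).1 mulnS leq_add2l IHn.
Qed.

Lemma card_young_traj_greedy S U (G : policy K) : greedy_policy S U G ->
  forall n v, v <= n -> #|young (traj G n).1 v| = minn (S * v) K.
Proof.
move=> [valid_G maxsum_G]; elim=> [|n IHn] [|w] // le_wn;
  rewrite ?young_traj0 ?cards0 ?muln0 ?min0n //.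
have card_X := (valid_G (traj G n)).1.
rewrite traj_relay_step young_refreshS card_setU_min.
  rewrite IHn // card_X card_ord mulnS addn_minr -minnA.
  by rewrite (minn_idPr (leq_addl _ _)).
exact: maxsum_young card_X (maxsum_G _).1 w.
Qed.

End Trajectories.

Theorem proposition2 (K S U : nat) (G : policy K) (T : nat) :
  (2 <= K)%N -> (1 <= S < K)%N -> (1 <= U < K)%N -> S = U ->
  greedy_policy S U G -> (1 <= T)%N ->
  forall pi : policy K, valid_policy S U pi ->
    (total_relay_AoI G T <= total_relay_AoI pi T)%N.
Proof.
move=> _ _ _ _ greedy_G _ pi valid_pi.
apply: leq_sum => t _; rewrite /relayAoI.
rewrite (sum_layers (traj_relay_le G t.-1)) (sum_layers (traj_relay_le pi t.-1)).
apply: leq_sum => -[v /=]; rewrite ltnS => le_vt _.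
rewrite (card_young_traj_greedy greedy_G le_vt) leq_sub2l // leq_min.
rewrite (card_young_traj_le valid_pi le_vt) /=.
by apply: leq_trans (max_card _) _; rewrite card_ord.
Qed.
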